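(* Let Assumptions (A1), (A2) and (A4) hold for Algorithm Min-max DS. For $\epsilon\in(0,1)$, let $k_\epsilon$ be the first iteration index such that $\mu_{k_\epsilon+1}\le\epsilon$. Then $$k_\epsilon\ \le\ \frac{2}{c\alpha_0^2}\big(f(x_0)-F^{\min}\big)+\frac{\Omega\,(L_{\max}+c)^2(\mathcal{C}_1+1)^2}{4\beta_1^2}\,\epsilon^{-2},$$ where $\Omega=\frac{\gamma^2}{1-\beta_2^2}\left(\gamma^{-2}\alpha_0^2+\frac2c(f(x_0)-F^{\min})\right)$.
   Context: $F=(f_1,\dots,f_m)$, $m\ge2$, $I=\{1,\dots,m\}$, $f(x):=\max_{i\in I}f_i(x)$. Algorithm Min-max DS: choose $x_0$ with $f_i(x_0)<\infty$, $\alpha_0>0$, $0<\beta_1\le\beta_2<1$, $\gamma\ge1$, a set $\mathcal{D}$ of positive spanning sets of unit vectors, and $c>0$. At iteration $k$: choose $D_k\in\mathcal{D}$; if some $d_k\in D_k$ satisfies $f(x_k+\alpha_kd_k)<f(x_k)-\frac c2\alpha_k^2$, the iteration is successful, $x_{k+1}=x_k+\alpha_kd_k$, $\alpha_{k+1}\in[\alpha_k,\gamma\alpha_k]$; otherwise unsuccessful, $x_{k+1}=x_k$, $\alpha_{k+1}\in[\beta_1\alpha_k,\beta_2\alpha_k]$. $\mu(x):=-\min_{\|d\|\le1}\max_{i\in I}\nabla f_i(x)^\top d$, $\mu_k:=\mu(x_k)$, $\mu_{D_k}:=-\min_{d\in D_k,\|d\|\le1}\max_{i\in I}\nabla f_i(x_k)^\top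 d$. Pareto dominance: $y\prec z$ iff $z-y\in\mathbb{R}^m_+\setminus\{0\}$. (A1): each $f_i$ is continuously differentiable with $L_i$-Lipschitz gradient; $L_{\max}=\max_iL_i$. (A2): each $f_i$ is bounded below by $f_i^{\min}$ and above by $f_i^{\max}$ on $\{x: F(x)$ is not dominated by $F(x_0)\}$; $F^{\min}=\min_if_i^{\min}$. (A4): there exists $\mathcal{C}_1>0$ with $|\mu_{D_k}-\mu_k|\le\mathcal{C}_1\mu_{D_k}$ for all $k\ge0$. *)

From Stdlib Require Import Reals ClassicalEpsilon.
From mathcomp Require Import ssreflect ssrfun ssrbool eqtype ssrnat seq fintype bigop.
Set Implicit Arguments.
Unset Strict Implicit.
Open Scope R_scope.

Definition vec (n : nat) := 'I_n -> R.
Definition vadd n (x y : vec n) : vec n := fun j => x j + y j.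
Definition vscale n (a : R) (x : vec n) : vec n := fun j => a * x j.
Definition vsub n (x y : vec n) : vec n := fun j => x j - y j.
Definition dot n (x y : vec n) : R := \big[Rplus/0]_(j < n) (x j * y j).
Definition vnorm n (x : vec n) : R := sqrt (dot x x).

Definition sup_R (E : R -> Prop) : R := epsilon (inhabits 0) (fun l => is_lub E l).
Definition inf_R (E : R -> Prop) : R := - sup_R (fun y => E (- y)).

Definition has_gradient n (f : vec n -> R) (g : vec n -> vec n) : Prop :=
  forall x eps, 0 < eps -> exists delta, 0 < delta /\
    forall h, vnorm h < delta ->
      Rabs (f (vadd x h) - f x - dot (g x) h) <= eps * vnorm h.

Definition lipschitz n (g : vec n -> vec n) (L : R) : Prop :=
  forall x y, vnorm (vsub (g x) (g y)) <= L * vnorm (vsub x y).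

(* max over the index set I = {0,...,m-1} (m >= 1) *)
Definition maxI (m : nat) (a : nat -> R) : R := \big[Rmax/a 0%N]_(i < m) a i.
Definition minI (m : nat) (a : nat -> R) : R := \big[Rmin/a 0%N]_(i < m) a i.

Definition fmax_obj n m (fs : nat -> vec n -> R) (x : vec n) : R := maxI m (fun i => fs i x).

Definition pareto_lt (m : nat) (y z : nat -> R) : Prop :=
  (forall i, (i < m)%N -> y i <= z i) /\ (exists i, (i < m)%N /\ y i <> z i).

Definition positive_spanning n (D : list (vec n)) : Prop :=
  forall v : vec n, exists lam : nat -> R, (forall j, 0 <= lam j) /\
    forall k : 'I_n, v k = \big[Rplus/0]_(j < size D) (lam j * (nth (fun _ => 0) D j) k).

Definition unit_vectors n (D : list (vec n)) : Prop :=
  forall d, List.In d D -> vnorm d = 1.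

Definition mu n m (grad : nat -> vec n -> vec n) (x : vec n) : R :=
  - inf_R (fun v => exists d : vec n, vnorm d <= 1 /\ v = maxI m (fun i => dot (grad i x) d)).

Definition mu_D n m (grad : nat -> vec n -> vec n) (D : list (vec n)) (x : vec n) : R :=
  - inf_R (fun v => exists d : vec n, List.In d D /\ vnorm d <= 1 /\
                    v = maxI m (fun i => dot (grad i x) d)).

Definition minmax_DS_run n m (fs : nat -> vec n -> R) (Dset : list (vec n) -> Prop)
  (c beta1 beta2 gamma : R) (x : nat -> vec n) (alpha : nat -> R) (D : nat -> list (vec n)) : Prop :=
  0 < alpha 0%N /\
  forall k : nat, Dset (D k) /\
   ((exists d, List.In d (D k) /\
       fmax_obj m fs (vadd (x k) (vscale (alpha k) d)) < fmax_obj m fs (x k) - c / 2 * alpha k ^ 2 /\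
       x k.+1 = vadd (x k) (vscale (alpha k) d) /\
       alpha k <= alpha k.+1 <= gamma * alpha k)
    \/
    ((forall d, List.In d (D k) ->
        ~ (fmax_obj m fs (vadd (x k) (vscale (alpha k) d)) < fmax_obj m fs (x k) - c / 2 * alpha k ^ 2)) /\
       x k.+1 = x k /\
       beta1 * alpha k <= alpha k.+1 <= beta2 * alpha k)).

From Stdlib Require Import Reals Lra Psatz ClassicalEpsilon Classical FunctionalExtensionality.
From Coquelicot Require Import Coquelicot.
From mathcomp Require Import ssreflect ssrfun ssrbool eqtype ssrnat seq fintype bigop.
Set Implicit Arguments.
Unset Strict Implicit.
Open Scope R_scope.

(* On an unsuccessful iteration no poll direction gives sufficient decrease, so the
   descent lemma for each f_i yields mu_D(x_k) <= (L_max + c) alpha_k / 2, and (A4)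
   turns this into mu(x_k) <= kappa alpha_k with kappa = (C1 + 1)(L_max + c) / 2.
   Before the tolerance is reached, unsuccessful step sizes thus exceed eps / kappa;
   since successful iterations never shrink the step and unsuccessful ones shrink it
   by a factor at least beta1, every step from the first unsuccessful iteration on is
   at least beta1 eps / kappa.  Sufficient decrease and the lower bound F_min from (A2)
   give alpha_{k+1}^2 <= beta2^2 alpha_k^2 + gamma^2 (2/c) (f(x_k) - f(x_{k+1})), which
   telescopes to sum_k alpha_k^2 <= Omega and so bounds the number of those later
   iterations, while the leading run of successful iterations has length at most
   2 (f(x_0) - F_min) / (c alpha_0^2). *)

Lemma big_Rplus_add (I : Type) (r : seq I) (F G : I -> R) :
  \big[Rplus/0]_(j <- r) (F j + G j) = \big[Rplus/0]_(j <- r) F j + \big[Rplus/0]_(j <- r) G j.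
Proof. elim: r => [|a r IH]; rewrite ?big_nil ?big_cons /=; [lra | rewrite IH; lra]. Qed.

Lemma big_Rplus_scale (I : Type) (r : seq I) (F : I -> R) a :
  \big[Rplus/0]_(j <- r) (a * F j) = a * \big[Rplus/0]_(j <- r) F j.
Proof. elim: r => [|b r IH]; rewrite ?big_nil ?big_cons /=; [lra | rewrite IH; lra]. Qed.

Lemma big_Rplus_ge0 (I : Type) (r : seq I) (F : I -> R) :
  (forall j, 0 <= F j) -> 0 <= \big[Rplus/0]_(j <- r) F j.
Proof. by move=> F_ge0; apply: (big_ind (fun v => 0 <= v)) => // [|u v]; lra. Qed.

Lemma big_Rmax_ub (I : eqType) (r : seq I) (F : I -> R) z i :
  i \in r -> F i <= \big[Rmax/z]_(j <- r) F j.
Proof.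
elim: r => [|a r IH] //; rewrite in_cons big_cons => /orP[/eqP-> | /IH]; first exact: Rmax_l.
by move=> le_Fi; apply: Rle_trans le_Fi (Rmax_r _ _).
Qed.

Lemma big_Rmin_lb (I : eqType) (r : seq I) (F : I -> R) z i :
  i \in r -> \big[Rmin/z]_(j <- r) F j <= F i.
Proof.
elim: r => [|a r IH] //; rewrite in_cons big_cons => /orP[/eqP-> | /IH]; first exact: Rmin_l.
exact: Rle_trans (Rmin_r _ _).
Qed.

Lemma maxI_ub m (a : nat -> R) i : (i < m)%N -> a i <= maxI m a.
Proof.
by move=> lt_im; apply: (@big_Rmax_ub _ _ (fun j : 'I_m => a j) _ _ (mem_index_enum (Ordinal lt_im))).
Qed.

Lemma maxI_lub m (a : nat -> R) B :
  (0 < m)%N -> (forall i, (i < m)%N -> a i <= B) -> maxI m a <= B.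
Proof.
move=> m_gt0 a_le; apply: (big_ind (fun v => v <= B)); first exact: a_le.
- by move=> u v; apply: Rmax_lub.
- by move=> i _; apply: a_le.
Qed.

Lemma minI_lb m (a : nat -> R) i : (i < m)%N -> minI m a <= a i.
Proof.
by move=> lt_im; apply: (@big_Rmin_lb _ _ (fun j : 'I_m => a j) _ _ (mem_index_enum (Ordinal lt_im))).
Qed.

Lemma sup_R_le (E : R -> Prop) B : (exists y, E y) -> (forall y, E y -> y <= B) -> sup_R E <= B.
Proof.
move=> [y Ey] E_le.
have [l lub_l] := completeness E (ex_intro _ B E_le) (ex_intro _ y Ey).
by apply: (proj2 (epsilon_spec (inhabits 0) (is_lub E) (ex_intro _ l lub_l))).
Qed.

Lemma dot_ge0 n (u : vec n) : 0 <= dot u u.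
Proof. by apply: big_Rplus_ge0 => j; nra. Qed.

Lemma dot_unit n (d : vec n) : vnorm d = 1 -> dot d d = 1.
Proof. by rewrite /vnorm => nd; rewrite -(sqrt_sqrt _ (dot_ge0 d)) nd; lra. Qed.

Lemma dot_scaler n (u d : vec n) t : dot u (vscale t d) = t * dot u d.
Proof. by rewrite /dot -big_Rplus_scale; apply: eq_bigr => j _; rewrite /vscale; ring. Qed.

Lemma dot_subl n (u v d : vec n) : dot (vsub u v) d = dot u d - dot v d.
Proof.
rewrite /dot (eq_bigr (fun j => u j * d j + (-1) * (v j * d j))) => [|j _]; [|by rewrite /vsub; ring].
by rewrite big_Rplus_add big_Rplus_scale -/(dot u d) -/(dot v d); ring.
Qed.

Lemma vnorm_scale_unit n (d : vec n) t : dot d d = 1 -> vnorm (vscale t d) = Rabs t.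
Proof.
move=> dd1; rewrite /vnorm /dot (eq_bigr (fun j => Rsqr t * (d j * d j))) => [|j _]; [|by rewrite /vscale /Rsqr; ring].
by rewrite big_Rplus_scale -/(dot d d) dd1 Rmult_1_r sqrt_Rsqr_abs.
Qed.

Lemma dot_le_vnorm n (u d : vec n) : dot d d = 1 -> dot u d <= vnorm u.
Proof.
move=> dd1; set l := dot u d.
have : 0 <= \big[Rplus/0]_(j < n) ((u j - l * d j) * (u j - l * d j)).
  by apply: big_Rplus_ge0 => j; apply: Rle_0_sqr.
rewrite (eq_bigr (fun j => u j * u j + ((-2 * l) * (u j * d j) + (l * l) * (d j * d j)))) => [|j _]; last ring.
rewrite !big_Rplus_add !big_Rplus_scale -/(dot u u) -/(dot u d) -/(dot d d) -/l dd1 => sq_ge0.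
apply: Rle_trans (Rle_abs _) _; rewrite -sqrt_Rsqr_abs; apply: sqrt_le_1_alt; rewrite /Rsqr; nra.
Qed.

Lemma vadd_scale_add n (x d : vec n) s t :
  vadd (vadd x (vscale s d)) (vscale t d) = vadd x (vscale (s + t) d).
Proof. by apply: functional_extensionality => j; rewrite /vadd /vscale; ring. Qed.

Lemma vadd_scale0 n (x d : vec n) : vadd x (vscale 0 d) = x.
Proof. by apply: functional_extensionality => j; rewrite /vadd /vscale; ring. Qed.

Lemma vsub_vaddl n (x v : vec n) : vsub (vadd x v) x = v.
Proof. by apply: functional_extensionality => j; rewrite /vadd /vsub; ring. Qed.

Lemma has_gradient_along_line n (f : vec n -> R) g x d t :
  has_gradient f g -> dot d d = 1 ->
  derivable_pt_lim (fun s => f (vadd x (vscale s d))) t (dot (g (vadd x (vscale t d))) d).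
Proof.
move=> grad_f dd1 e e_gt0.
have [delta [delta_gt0 near]] := grad_f (vadd x (vscale t d)) (e / 2) ltac:(lra).
exists (mkposreal delta delta_gt0) => h h_neq0 h_small /=.
have nh : vnorm (vscale h d) = Rabs h by apply: vnorm_scale_unit.
have := near (vscale h d) ltac:(rewrite nh; exact: h_small).
rewrite vadd_scale_add dot_scaler nh.
set A := f _; set B := f _; set G := dot _ d => err.
have -> : (A - B) / h - G = (A - B - h * G) * / h by field.
have ah_gt0 : 0 < Rabs h by apply: Rabs_pos_lt.
rewrite Rabs_mult Rabs_inv.
have inv_ah : / Rabs h * Rabs h = 1 by field; lra.
have := Rinv_0_lt_compat _ ah_gt0; nra.
Qed.

Lemma descent_lemma n (f : vec n -> R) g Lc x d a :
  has_gradient f g -> lipschitz g Lc -> dot d d = 1 -> 0 < a ->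
  f (vadd x (vscale a d)) <= f x + a * dot (g x) d + Lc * a ^ 2 / 2.
Proof.
move=> grad_f lip_g dd1 a_gt0.
set phi := fun t => f (vadd x (vscale t d)).
set G0 := dot (g x) d.
set psi := fun t => phi t - phi 0 - (t * G0 + Lc * t ^ 2 / 2).
have dpsi t : derivable_pt_lim psi t
    ((dot (g (vadd x (vscale t d))) d - 0) - (G0 + Lc * t)).
{ apply: (derivable_pt_lim_minus (fun t => phi t - phi 0) (fun t => t * G0 + Lc * t ^ 2 / 2)).
  - apply: (derivable_pt_lim_minus phi (fct_cte (phi 0))); last exact: derivable_pt_lim_const.
    exact: has_gradient_along_line.
  - apply is_derive_Reals; auto_derive => //; field. }
have [t [t_range psi_a]] := MVT_cor2 psi _ 0 a a_gt0 (fun t _ => dpsi t).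
(* The Lipschitz gradient makes psi' nonpositive, so psi a <= psi 0 = 0. *)
have slope : dot (g (vadd x (vscale t d))) d - G0 <= Lc * t.
{ rewrite /G0 -dot_subl; apply: Rle_trans (dot_le_vnorm _ dd1) _.
  apply: Rle_trans (lip_g _ _) _.
  by rewrite vsub_vaddl vnorm_scale_unit // Rabs_pos_eq; lra. }
have psi0 : psi 0 = 0 by rewrite /psi; field.
have : psi a <= 0 by nra.
by rewrite /psi /phi vadd_scale0; lra.
Qed.

Lemma fmax_obj_descent n m (fs : nat -> vec n -> R) grad (L : nat -> R) y d a :
  (0 < m)%N ->
  (forall i, (i < m)%N -> has_gradient (fs i) (grad i) /\ lipschitz (grad i) (L i)) ->
  dot d d = 1 -> 0 < a ->
  fmax_obj m fs (vadd y (vscale a d)) <=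
  fmax_obj m fs y + a * maxI m (fun i => dot (grad i y) d) + maxI m L * a ^ 2 / 2.
Proof.
move=> m_gt0 A1 dd1 a_gt0; apply: maxI_lub => // i lt_im.
have [grad_fi lip_gi] := A1 i lt_im.
have := descent_lemma y grad_fi lip_gi dd1 a_gt0.
have := maxI_ub (fun i => fs i y) lt_im.
have := maxI_ub (fun i => dot (grad i y) d) lt_im.
have := maxI_ub L lt_im.
rewrite /fmax_obj; nra.
Qed.

Lemma positive_spanning_neq_nil n (Ds : list (vec n)) :
  (0 < n)%N -> positive_spanning Ds -> Ds <> nil.
Proof.
move=> n_gt0 span_Ds Ds_nil; have [lam [_ comb]] := span_Ds (fun _ => 1).
by have := comb (Ordinal n_gt0); rewrite Ds_nil big_ord0; lra.
Qed.

Definition poll_fails n m (fs : nat -> vec n -> R) c (Ds : list (vec n)) y a :=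
  forall d, List.In d Ds ->
    ~ fmax_obj m fs (vadd y (vscale a d)) < fmax_obj m fs y - c / 2 * a ^ 2.

Lemma mu_D_le_of_poll_failure n m (fs : nat -> vec n -> R) grad (L : nat -> R) c
    (Ds : list (vec n)) y a :
  (0 < n)%N -> (0 < m)%N -> positive_spanning Ds -> unit_vectors Ds ->
  (forall i, (i < m)%N -> has_gradient (fs i) (grad i) /\ lipschitz (grad i) (L i)) -> 0 < a ->
  poll_fails m fs c Ds y a ->
  mu_D m grad Ds y <= (maxI m L + c) * a / 2.
Proof.
move=> n_gt0 m_gt0 span_Ds unit_Ds A1 a_gt0 poll_fail.
rewrite /mu_D /inf_R Ropp_involutive; apply: sup_R_le.
  case: Ds span_Ds unit_Ds {poll_fail} => [|d0 Ds] span_Ds unit_Ds.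
    by have := positive_spanning_neq_nil n_gt0 span_Ds.
  exists (- maxI m (fun i => dot (grad i y) d0)), d0.
  by rewrite (unit_Ds d0 (or_introl erefl)) Ropp_involutive; split; [left | split; [lra |]].
move=> v [d [in_d [_ Ev]]].
have dd1 := dot_unit (unit_Ds d in_d).
have := fmax_obj_descent y m_gt0 A1 dd1 a_gt0.
have /Rnot_lt_le := poll_fail d in_d.
rewrite -Ev => ge_dec le_desc.
have : a * v <= a * ((maxI m L + c) * a / 2) by nra.
by move/(Rmult_le_reg_l _ _ _ a_gt0).
Qed.

Lemma mu_le_of_poll_failure n m (fs : nat -> vec n -> R) grad (L : nat -> R) c C1
    (Ds : list (vec n)) y a :
  (0 < n)%N -> (0 < m)%N -> positive_spanning Ds -> unit_vectors Ds ->
  (forall i, (i < m)%N -> has_gradient (fs i) (grad i) /\ lipschitz (grad i) (L i)) -> 0 < a ->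
  poll_fails m fs c Ds y a ->
  0 <= C1 -> Rabs (mu_D m grad Ds y - mu m grad y) <= C1 * mu_D m grad Ds y ->
  mu m grad y <= (C1 + 1) * ((maxI m L + c) / 2) * a.
Proof.
move=> n_gt0 m_gt0 span_Ds unit_Ds A1 a_gt0 poll_fail C1_ge0 close.
have := mu_D_le_of_poll_failure n_gt0 m_gt0 span_Ds unit_Ds A1 a_gt0 poll_fail.
have [mu_le _] := proj1 (Rabs_le_between' _ _ _) close => muD_le.
have : (C1 + 1) * mu_D m grad Ds y <= (C1 + 1) * ((maxI m L + c) * a / 2).
  by apply: Rmult_le_compat_l; lra.
lra.
Qed.

Lemma mu_dim0_le0 m (grad : nat -> vec 0 -> vec 0) y : mu m grad y <= 0.
Proof.
have dot0 (u v : vec 0) : dot u v = 0 by rewrite /dot big_ord0.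
have max0 (d : vec 0) : maxI m (fun i => dot (grad i y) d) = 0.
  by apply: (big_ind (fun v => v = 0)) => [|u v -> ->|i _]; rewrite ?dot0 ?Rmax_left; lra.
rewrite /mu /inf_R Ropp_involutive; apply: sup_R_le.
  by exists 0, (fun _ => 0); rewrite max0 /vnorm dot0 sqrt_0; split; lra.
by move=> v [d [_ Ev]]; move: Ev; rewrite max0; lra.
Qed.

Fixpoint psum (g : nat -> R) (N : nat) : R :=
  if N is N'.+1 then psum g N' + g N' else 0.

Lemma psum_ge0 g N : (forall j, 0 <= g j) -> 0 <= psum g N.
Proof. by move=> g_ge0; elim: N => [|N IH] /=; [lra | have := g_ge0 N; lra]. Qed.

Lemma psum_scale g N k : psum (fun j => k * g j) N = k * psum g N.
Proof. by elim: N => [|N IH] /=; [ring | rewrite IH; ring]. Qed.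

Lemma psum_lb_tail g u b K : (forall j, 0 <= g j) ->
  (forall j, (u <= j)%N -> (j < K)%N -> b <= g j) -> INR (K - u) * b <= psum g K.
Proof.
move=> g_ge0; elim: K => [|K IH] b_le /=.
  by rewrite ?sub0n /=; lra.
have IH' := IH (fun j le_uj lt_jK => b_le j le_uj (ltnW lt_jK)).
case: (leqP u K) => [le_uK | lt_Ku].
  by rewrite subSn // S_INR; have := b_le K le_uK (ltnSn K); lra.
have -> : (K.+1 - u)%N = 0%N by apply/eqP; rewrite subn_eq0.
by have := psum_ge0 K g_ge0; have := g_ge0 K; rewrite /=; lra.
Qed.

Lemma prefix_or_first_failure (P : nat -> Prop) K :
  (forall k, (k < K)%N -> P k) \/ exists u, [/\ (u < K)%N, ~ P u & forall k, (k < u)%N -> P k].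
Proof.
elim: K => [|K [IH | [u [lt_uK not_Pu pre_u]]]]; first by left.
- case: (classic (P K)) => [PK | not_PK]; last by right; exists K.
  by left => k; rewrite ltnS leq_eqVlt => /orP[/eqP-> | /IH].
- by right; exists u; split => //; apply: ltnW.
Qed.

Section MinMaxDSRun.

Variables (n m : nat) (fs : nat -> vec n -> R) (Dset : list (vec n) -> Prop).
Variables (c beta1 beta2 gamma : R).
Variables (x : nat -> vec n) (alpha : nat -> R) (D : nat -> list (vec n)).
Hypotheses (c_gt0 : 0 < c) (beta1_gt0 : 0 < beta1) (beta12 : beta1 <= beta2) (beta2_lt1 : beta2 < 1).
Hypothesis gamma_ge1 : 1 <= gamma.
Hypothesis run : minmax_DS_run m fs Dset c beta1 beta2 gamma x alpha D.

Let fx k := fmax_obj m fs (x k).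

Definition successful k :=
  fx k.+1 < fx k - c / 2 * alpha k ^ 2 /\ alpha k <= alpha k.+1 <= gamma * alpha k.

Definition unsuccessful k :=
  [/\ poll_fails m fs c (D k) (x k) (alpha k), x k.+1 = x k
    & beta1 * alpha k <= alpha k.+1 <= beta2 * alpha k].

Lemma successful_or_unsuccessful k : successful k \/ unsuccessful k.
Proof.
have [_ [[d [_ [dec [xk step]]]] | [poll_fail [xk step]]]] := proj2 run k.
- by left; rewrite /successful /fx xk.
- by right.
Qed.

Lemma step_size_gt0 k : 0 < alpha k.
Proof.
elim: k => [|k IH]; first exact: proj1 run.
by case: (successful_or_unsuccessful k) => [[_ step] | [_ _ step]]; nra.
Qed.

Lemma iterate_initial_or_fx_lt k : x k = x 0%N \/ fx k < fx 0%N.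
Proof.
elim: k => [|k IH]; first by left.
have := step_size_gt0 k.
case: (successful_or_unsuccessful k) => [[dec _] | [_ xk _]]; last by rewrite /fx xk.
right; case: IH => [xk0 | lt_fx]; last by nra.
by move: dec; rewrite /fx -xk0; nra.
Qed.

Lemma minI_le_fx (fmin : nat -> R) : (0 < m)%N ->
  (forall i y, (i < m)%N -> ~ pareto_lt m (fun j => fs j (x 0%N)) (fun j => fs j y) ->
               fmin i <= fs i y) ->
  forall k, minI m fmin <= fx k.
Proof.
move=> m_gt0 A2 k.
have not_dominated : ~ pareto_lt m (fun j => fs j (x 0%N)) (fun j => fs j (x k)).
{ move=> [le_F [i [lt_im neq_i]]]; case: (iterate_initial_or_fx_lt k) => [xk0 | lt_fx].
    by apply: neq_i; rewrite xk0.
  have : fx 0%N <= fx k.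
    apply: maxI_lub => // j lt_jm; apply: Rle_trans (le_F j lt_jm) _.
    exact: (maxI_ub (fun i => fs i (x k))).
  lra. }
have := A2 0%N (x k) m_gt0 not_dominated.
have := minI_lb fmin m_gt0.
have := maxI_ub (fun i => fs i (x k)) m_gt0.
rewrite /fx /fmax_obj; lra.
Qed.

Variable flow : R.
Hypothesis flow_le_fx : forall k, flow <= fx k.

Lemma successful_prefix_length j : (forall k, (k < j)%N -> successful k) ->
  INR j <= 2 / (c * alpha 0%N ^ 2) * (fx 0%N - flow).
Proof.
move=> succ_j.
have [_ decrease] : alpha 0%N <= alpha j /\ INR j * (c * alpha 0%N ^ 2 / 2) <= fx 0%N - fx j.
{ elim: j succ_j => [|j IH] succ_j; first by rewrite /=; lra.
  have [le_a0 dec_j] := IH (fun k lt_kj => succ_j k (ltnW lt_kj)).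
  have [dec step] := succ_j j (ltnSn j).
  have sq_le : alpha 0%N ^ 2 <= alpha j ^ 2.
    by apply: pow_incr; have := step_size_gt0 0%N; lra.
  have : c * alpha 0%N ^ 2 / 2 <= c / 2 * alpha j ^ 2 by nra.
  rewrite S_INR; split; lra. }
have a0_sq_gt0 : 0 < alpha 0%N ^ 2 by apply: pow_lt; apply: step_size_gt0.
have le_fj := flow_le_fx j.
apply: (Rmult_le_reg_r (c * alpha 0%N ^ 2 / 2)); first nra.
have -> : 2 / (c * alpha 0%N ^ 2) * (fx 0%N - flow) * (c * alpha 0%N ^ 2 / 2) = fx 0%N - flow.
  by field; split; nra.
lra.
Qed.

Lemma step_size_sq_next k :
  alpha k.+1 ^ 2 <= beta2 ^ 2 * alpha k ^ 2 + gamma ^ 2 * (2 / c) * (fx k - fx k.+1).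
Proof.
have a_gt0 := step_size_gt0 k.
have two_c_gt0 : 0 < 2 / c by apply: Rdiv_lt_0_compat; lra.
have beta_term_ge0 : 0 <= beta2 ^ 2 * alpha k ^ 2 by apply: Rmult_le_pos; apply: pow2_ge_0.
case: (successful_or_unsuccessful k) => [[dec step] | [_ xk step]].
- have dec' : alpha k ^ 2 <= 2 / c * (fx k - fx k.+1).
    have -> : alpha k ^ 2 = 2 / c * (c / 2 * alpha k ^ 2) by field; lra.
    by apply: Rmult_le_compat_l; lra.
  have : alpha k.+1 ^ 2 <= (gamma * alpha k) ^ 2 by apply: pow_incr; lra.
  have : gamma ^ 2 * alpha k ^ 2 <= gamma ^ 2 * (2 / c * (fx k - fx k.+1)).
    by apply: Rmult_le_compat_l; [apply: pow2_ge_0 | lra].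
  rewrite Rpow_mult_distr; lra.
- rewrite /fx xk Rminus_diag Rmult_0_r Rplus_0_r -Rpow_mult_distr.
  by apply: pow_incr; have := step_size_gt0 k.+1; lra.
Qed.

Let Omega := gamma ^ 2 / (1 - beta2 ^ 2) *
             (/ gamma ^ 2 * alpha 0%N ^ 2 + 2 / c * (fx 0%N - flow)).

Lemma psum_step_size_sq_le N : psum (fun j => alpha j ^ 2) N <= Omega.
Proof.
set S := psum (fun j => alpha j ^ 2).
have telescope N' : S N'.+1 <= alpha 0%N ^ 2 + beta2 ^ 2 * S N' + gamma ^ 2 * (2 / c) * (fx 0%N - fx N').
{ elim: N' => [|N' IH]; first by rewrite /S /=; lra.
  by move: IH (step_size_sq_next N'); rewrite /S /= -/S; lra. }
have S_le_succ N' : S N' <= S N'.+1 by rewrite /S /=; nra.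
have S_ge0 N' : 0 <= S N' by apply: psum_ge0 => j; nra.
have gamma_sq_pos : 0 < gamma ^ 2 by nra.
have -> : Omega = (alpha 0%N ^ 2 + gamma ^ 2 * (2 / c) * (fx 0%N - flow)) / (1 - beta2 ^ 2).
  by rewrite /Omega; field; split; nra.
apply: Rle_trans (S_le_succ N) _.
apply: (Rmult_le_reg_r (1 - beta2 ^ 2)); first nra.
rewrite /Rdiv Rmult_assoc Rinv_l; last nra.
have := telescope N; have := flow_le_fx N; have := S_le_succ N; have := S_ge0 N.
have : 0 <= gamma ^ 2 * (2 / c) by apply: Rmult_le_pos; [nra | apply: Rlt_le; apply: Rdiv_lt_0_compat; lra].
nra.
Qed.

Lemma Omega_ge0 : 0 <= Omega.
Proof. exact: Rle_trans (Rle_refl 0) (psum_step_size_sq_le 0). Qed.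

Section AfterFirstFailure.

Variables (kappa b : R) (u K : nat).
Hypotheses (b_gt0 : 0 < b) (lt_uK : (u < K)%N) (fail_u : unsuccessful u).
Hypothesis small_if_fail : forall j, (j < K)%N -> unsuccessful j -> b < kappa * alpha j.

Lemma step_size_lb_after_failure j : (u <= j <= K)%N -> beta1 * b <= kappa * alpha j.
Proof.
have kappa_gt0 : 0 < kappa.
  by have := small_if_fail lt_uK fail_u; have := step_size_gt0 u; nra.
move=> /andP[le_uj]; rewrite -(subnKC le_uj); elim: (j - u)%N => [|d IH].
  by rewrite addn0 => _; have := small_if_fail lt_uK fail_u; nra.
rewrite addnS => lt_K; have := IH (ltnW lt_K); have := step_size_gt0 (u + d).
case: (successful_or_unsuccessful (u + d)) => [[_ step] | fail].
  by nra.
have := small_if_fail lt_K fail; case: fail => [_ _ step]; nra.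
Qed.

Lemma failure_tail_length : INR (K - u) * (beta1 * b) ^ 2 <= kappa ^ 2 * Omega.
Proof.
have kappa_sq_ge0 : 0 <= kappa ^ 2 by apply: pow2_ge_0.
apply: Rle_trans (Rmult_le_compat_l _ _ _ kappa_sq_ge0 (psum_step_size_sq_le K)).
rewrite -psum_scale; apply: psum_lb_tail => [j | j le_uj lt_jK]; first exact: Rmult_le_pos (pow2_ge_0 _).
have := step_size_lb_after_failure (j := j); rewrite le_uj (ltnW lt_jK) => /(_ erefl).
rewrite -Rpow_mult_distr => lb; apply: pow_incr; split => //; apply: Rlt_le; exact: Rmult_lt_0_compat.
Qed.

End AfterFirstFailure.

Lemma iteration_count_le kappa b K : 0 < b ->
  (forall j, (j < K)%N -> unsuccessful j -> b < kappa * alpha j) ->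
  INR K <= 2 / (c * alpha 0%N ^ 2) * (fx 0%N - flow) + kappa ^ 2 * Omega / (beta1 * b) ^ 2.
Proof.
move=> b_gt0 small_if_fail.
have b_sq_gt0 : 0 < (beta1 * b) ^ 2 by apply: pow_lt; nra.
have tail_ge0 : 0 <= kappa ^ 2 * Omega / (beta1 * b) ^ 2.
  by apply: Rdiv_le_0_compat => //; apply: Rmult_le_pos; [apply: pow2_ge_0 | apply: Omega_ge0].
have [all_succ | [u [lt_uK not_succ pre_u]]] := prefix_or_first_failure successful K.
  by have := successful_prefix_length all_succ; lra.
have fail_u : unsuccessful u by case: (successful_or_unsuccessful u).
have := failure_tail_length b_gt0 lt_uK fail_u small_if_fail.
move/(Rle_div_r _ _ _ b_sq_gt0); have := successful_prefix_length pre_u.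
have -> : INR K = INR u + INR (K - u) by rewrite -{1}(subnKC (ltnW lt_uK)); apply: plus_INR.
lra.
Qed.

End MinMaxDSRun.

Theorem theorem3
  (n m : nat) (Hm : (2 <= m)%N)
  (fs : nat -> vec n -> R) (grad : nat -> vec n -> vec n) (L : nat -> R)
  (fmin fmax : nat -> R) (C1 : R)
  (Dset : list (vec n) -> Prop)
  (c beta1 beta2 gamma : R)
  (x : nat -> vec n) (alpha : nat -> R) (D : nat -> list (vec n))
  (* algorithm parameters *)
  (Hbeta : 0 < beta1 <= beta2 /\ beta2 < 1) (Hgamma : 1 <= gamma) (Hc : 0 < c)
  (HDset : forall Ds, Dset Ds -> positive_spanning Ds /\ unit_vectors Ds)
  (Hrun : minmax_DS_run m fs Dset c beta1 beta2 gamma x alpha D)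
  (* (A1) *)
  (HA1 : forall i, (i < m)%N -> has_gradient (fs i) (grad i) /\ lipschitz (grad i) (L i))
  (* (A2) *)
  (HA2 : forall i, (i < m)%N -> forall y : vec n,
           ~ pareto_lt m (fun j => fs j (x 0%N)) (fun j => fs j y) ->
           fmin i <= fs i y <= fmax i)
  (* (A4) *)
  (HC1 : 0 < C1)
  (HA4 : forall k, Rabs (mu_D m grad (D k) (x k) - mu m grad (x k)) <= C1 * mu_D m grad (D k) (x k))
  (eps : R) (Heps : 0 < eps < 1) (keps : nat)
  (Hkeps : mu m grad (x keps.+1) <= eps /\
           forall j, (j < keps)%N -> eps < mu m grad (x j.+1)) :
  let Fmin := minI m fmin in
  let Lmax := maxI m L in
  let f0 := fmax_obj m fs (x 0%N) in
  let Omega := gamma ^ 2 / (1 - beta2 ^ 2) *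
               (/ gamma ^ 2 * alpha 0%N ^ 2 + 2 / c * (f0 - Fmin)) in
  INR keps <= 2 / (c * alpha 0%N ^ 2) * (f0 - Fmin)
              + Omega * (Lmax + c) ^ 2 * (C1 + 1) ^ 2 / (4 * beta1 ^ 2) * / eps ^ 2.
Proof.
move=> Fmin Lmax f0 Omega.
have m_gt0 : (0 < m)%N by apply: leq_trans Hm.
have [[beta1_gt0 beta12] beta2_lt1] := Hbeta.
have Fmin_le := minI_le_fx Hc beta1_gt0 beta12 beta2_lt1 Hrun m_gt0
                  (fun i y lt_im nd => proj1 (HA2 i lt_im y nd)).
set kappa := (C1 + 1) * ((Lmax + c) / 2).
have small_if_fail j : (j < keps)%N -> unsuccessful m fs c beta1 beta2 x alpha D j ->
                       eps < kappa * alpha j.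
{ move=> lt_j [poll_fail xj _]; have := proj2 Hkeps j lt_j; rewrite xj.
  have [n0 | n_gt0] := posnP n.
    by subst n; have := mu_dim0_le0 m grad (x j); lra.
  have [span_Dj unit_Dj] := HDset _ (proj1 (proj2 Hrun j)).
  have := mu_le_of_poll_failure n_gt0 m_gt0 span_Dj unit_Dj HA1
            (step_size_gt0 beta1_gt0 Hrun j) poll_fail (Rlt_le _ _ HC1) (HA4 j).
  rewrite -/Lmax -/kappa; lra. }
have -> : Omega * (Lmax + c) ^ 2 * (C1 + 1) ^ 2 / (4 * beta1 ^ 2) * / eps ^ 2
          = kappa ^ 2 * Omega / (beta1 * eps) ^ 2 by rewrite /kappa; field; lra.
exact (iteration_count_le Hc beta1_gt0 beta12 beta2_lt1 Hgamma Hrun Fmin_le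
         (proj1 Heps) small_if_fail).
Qed.
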